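(* For any $i,j\in\{1,\dots,5\}$, if $\mathrm{id}\notin\operatorname{Pol}(R_i,R'_j)$ and $\neg\notin\operatorname{Pol}(R_i,R'_j)$, then $\operatorname{Pol}(R_i,R'_j)$ is exactly the set of constant Boolean functions (of all arities).
   Context: Tuples in $\{0,1\}^4$ are written as strings $abcd$. The relations $R_1,\dots,R_5\subseteq\{0,1\}^4$ are $R_1=\{0000,1000,0100,1100,1010,0110,1001,0101,0011,1011,0111,1111\}$, $R_2=\{0000,1000,0100,1100,1010,0101,0011,1111\}$, $R_3=\{0000,1100,1010,0101,0011,1011,0111,1111\}$, $R_4=\{0000,1100,1010,0101,0011,1111\}$, $R_5=\{0000,1100,1010,0110,1001,0101,0011,1111\}$. For $S\subseteq\{0,1\}^4$, $S':=S\cup\{(a,b,c,d)\in\{0,1\}^4\mid \nexists x\colon (a,b,c,x)\in S\}$. An $n$-ary Boolean function $f$ preserves $(R,S)$ if $f(\mathbf{a}_1,\dots,\mathbf{a}_n)\in S$ (componentwise) for all $\mathbf{a}_1,\dots,\mathbf{a}_n\in R$; $\operatorname{Pol}(R,S)$ is the set of all Boolean functions of all arities preserving $(R,S)$. $\mathrm{id}$ is the unary identity and $\neg x=1-x$. *)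

From mathcomp Require Import all_boot.
Set Implicit Arguments. Unset Strict Implicit. Unset Printing Implicit Defensive.

(* Elements of {0,1}^4; the string abcd is the function 0|->a,1|->b,2|->c,3|->d. *)
Definition T4 := {ffun 'I_4 -> bool}.

Definition tup (a b c d : bool) : T4 :=
  [ffun i : 'I_4 => nth false [:: a; b; c; d] i].

Definition rel_of (l : seq (seq bool)) : pred T4 :=
  fun t => [seq t i | i <- enum 'I_4] \in l.

Definition R1 : pred T4 := rel_of
  [:: [::false;false;false;false]; [::true;false;false;false];
      [::false;true;false;false];  [::true;true;false;false];
      [::true;false;true;false];   [::false;true;true;false];
      [::true;false;false;true];   [::false;true;false;true];
      [::false;false;true;true];   [::true;false;true;true];
      [::false;true;true;true];    [::true;true;true;true]].

Definition R2 : pred T4 := rel_of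
  [:: [::false;false;false;false]; [::true;false;false;false];
      [::false;true;false;false];  [::true;true;false;false];
      [::true;false;true;false];   [::false;true;false;true];
      [::false;false;true;true];   [::true;true;true;true]].

Definition R3 : pred T4 := rel_of
  [:: [::false;false;false;false]; [::true;true;false;false];
      [::true;false;true;false];   [::false;true;false;true];
      [::false;false;true;true];   [::true;false;true;true];
      [::false;true;true;true];    [::true;true;true;true]].

Definition R4 : pred T4 := rel_of
  [:: [::false;false;false;false]; [::true;true;false;false];
      [::true;false;true;false];   [::false;true;false;true];
      [::false;false;true;true];   [::true;true;true;true]].

Definition R5 : pred T4 := rel_of
  [:: [::false;false;false;false]; [::true;true;false;false];
      [::true;false;true;false];   [::false;true;true;false];
      [::true;false;false;true];   [::false;true;false;true];
      [::false;false;true;true];   [::true;true;true;true]].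

Definition Rel (i : nat) : pred T4 :=
  match i with 1 => R1 | 2 => R2 | 3 => R3 | 4 => R4 | 5 => R5 | _ => pred0 end.

Definition prime_rel (S : pred T4) : pred T4 :=
  fun t => S t || ~~ [exists x : bool, S (tup (t ord0) (t (inord 1)) (t (inord 2)) x)].

Definition boolfun (n : nat) := {ffun 'I_n -> bool} -> bool.

Definition preserves (n : nat) (f : boolfun n) (R S : pred T4) : Prop :=
  forall a : 'I_n -> T4, (forall k, R (a k)) ->
    S [ffun c : 'I_4 => f [ffun k => a k c]].

Definition inPol (R S : pred T4) (n : nat) (f : boolfun n) : Prop := preserves f R S.

Definition id_fun : boolfun 1 := fun x => x ord0.
Definition neg_fun : boolfun 1 := fun x => ~~ x ord0.

Definition is_constant (n : nat) (f : boolfun n) : Prop :=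
  exists b : bool, forall x, f x = b.

From mathcomp Require Import all_boot.
Set Implicit Arguments. Unset Strict Implicit. Unset Printing Implicit Defensive.

(* Every relation involved contains the constant tuples, so constants may be
   substituted for variables of a polymorphism: Pol(R_i, R'_j) is closed under
   minors with constants.  A nonconstant f has x, y with f x <> f y; substituting
   the constant x k for the coordinates where x and y agree and a first (second)
   variable where x k = 1 (x k = 0) yields a binary polymorphism g with
   g(1,0) = f x <> f y = g(0,1).  A finite check shows that for each of the 25
   pairs of relations such a g exists only if id or negation is a polymorphism. *)

Section Polymorphisms.

Variables (R S : pred T4).

Lemma preserves_const n (f : boolfun n) b :
  (forall x, f x = b) -> S [ffun => b] -> preserves f R S.
Proof.
move=> fb Sb a _; congr (S _): Sb.
by apply/ffunP => c; rewrite !ffunE fb.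
Qed.

Definition subst_vars n m (s : 'I_n -> 'I_m + bool) (y : {ffun 'I_m -> bool}) :
    {ffun 'I_n -> bool} :=
  [ffun k => match s k with inl l => y l | inr b => b end].

Definition minor n m (f : boolfun n) (s : 'I_n -> 'I_m + bool) : boolfun m :=
  fun y => f (subst_vars s y).

Lemma preserves_minor n m (f : boolfun n) (s : 'I_n -> 'I_m + bool) :
  (forall b, R [ffun => b]) -> preserves f R S -> preserves (minor f s) R S.
Proof.
move=> R_const Pf a Ra.
pose a' k := match s k with inl l => a l | inr b => [ffun => b] end.
have Ra' k : R (a' k) by rewrite /a'; case: (s k).
congr (S _): (Pf a' Ra'); apply/ffunP => c; rewrite !ffunE; congr f.
by apply/ffunP => k; rewrite !ffunE /a'; case: (s k) => // b; rewrite ffunE.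
Qed.

Definition pres2 (t : bool -> bool -> bool) : Prop :=
  forall u v, R u -> R v -> S [ffun c => t (u c) (v c)].

Definition pair2 (a b : bool) : {ffun 'I_2 -> bool} :=
  [ffun k => if k == ord0 then a else b].

Lemma preserves_pres2 (g : boolfun 2) :
  preserves g R S -> pres2 (fun a b => g (pair2 a b)).
Proof.
move=> Pg u v Ru Rv.
have Ra (k : 'I_2) : R (if k == ord0 then u else v) by case: (k == ord0).
congr (S _): (Pg _ Ra); apply/ffunP => c; rewrite !ffunE; congr g.
by apply/ffunP => k; rewrite !ffunE; case: (k == ord0).
Qed.

End Polymorphisms.

Lemma constant_or_separated n (f : boolfun n) :
  is_constant f \/ exists x y, f x != f y.
Proof.
set x0 := [ffun => false] : {ffun 'I_n -> bool}.
have [/existsP [x fx] | /existsPn same] := boolP [exists x, f x != f x0].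
  by right; exists x, x0.
by left; exists (f x0) => x; apply/eqP/negbNE; exact: same.
Qed.

Lemma separating_binary_minor n (f : boolfun n) x y : f x != f y ->
  exists s : 'I_n -> 'I_2 + bool,
    minor f s (pair2 true false) != minor f s (pair2 false true).
Proof.
move=> fxy.
pose s k : 'I_2 + bool :=
  if x k == y k then inr (x k) else inl (if x k then ord0 else ord_max).
have sx : subst_vars s (pair2 true false) = x.
  by apply/ffunP => k; rewrite !ffunE /s; case: (x k); case: (y k); rewrite /= ?ffunE.
have sy : subst_vars s (pair2 false true) = y.
  by apply/ffunP => k; rewrite !ffunE /s; case: (x k); case: (y k); rewrite /= ?ffunE.
by exists s; rewrite /minor sx sy.
Qed.

Lemma tup_eta (t : T4) : t = tup (t ord0) (t (inord 1)) (t (inord 2)) (t (inord 3)).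
Proof.
apply/ffunP => k; rewrite ffunE; case: k => [[|[|[|[|k]]]] Hk] //=;
  by congr (t _); apply: val_inj; rewrite /= ?inordK.
Qed.

Lemma tup_map (h : bool -> bool) a b c d :
  [ffun k => h (tup a b c d k)] = tup (h a) (h b) (h c) (h d).
Proof. by apply/ffunP => k; rewrite !ffunE; case: k => [[|[|[|[|k]]]] Hk]. Qed.

Lemma tup_map2 (t : bool -> bool -> bool) u1 u2 u3 u4 v1 v2 v3 v4 :
  [ffun k => t (tup u1 u2 u3 u4 k) (tup v1 v2 v3 v4 k)] =
  tup (t u1 v1) (t u2 v2) (t u3 v3) (t u4 v4).
Proof. by apply/ffunP => k; rewrite !ffunE; case: k => [[|[|[|[|k]]]] Hk]. Qed.

Lemma ffun_const_tup b : [ffun => b] = tup b b b b.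
Proof. by apply/ffunP => k; rewrite !ffunE; case: k => [[|[|[|[|k]]]] Hk]. Qed.

(* Quantifiers over T4 and ffun application do not reduce under vm_compute, so
   the finite checks run on relations presented as functions of four bits. *)
Definition bitrel := bool -> bool -> bool -> bool -> bool.

Definition encodes (R : pred T4) (rb : bitrel) : Prop :=
  forall a b c d, R (tup a b c d) = rb a b c d.

Definition rel_bits (l : seq (seq bool)) : bitrel := fun a b c d => [:: a; b; c; d] \in l.

Definition prime_bits (rb : bitrel) : bitrel :=
  fun a b c d => rb a b c d || ~~ (rb a b c false || rb a b c true).

Lemma encodes_rel_of l : encodes (rel_of l) (rel_bits l).
Proof.
move=> a b c d; rewrite /rel_of /rel_bits; congr (_ \in l).
apply: (@eq_from_nth _ false); first by rewrite size_map size_enum_ord.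
rewrite size_map size_enum_ord => k Hk.
by rewrite (nth_map ord0) ?size_enum_ord // ffunE nth_enum_ord.
Qed.

Lemma encodes_prime_rel S sb : encodes S sb -> encodes (prime_rel S) (prime_bits sb).
Proof.
move=> Ssb a b c d; rewrite /prime_rel /prime_bits Ssb !ffunE /= !inordK //.
congr (_ || ~~ _); apply/existsP/orP => [[[]]|[]] Sx; rewrite ?Ssb.
- by right; rewrite -Ssb.
- by left; rewrite -Ssb.
- by exists false; rewrite Ssb.
- by exists true; rewrite Ssb.
Qed.

Definition bits : seq bool := [:: false; true].

Definition all4 (P : bitrel) : bool :=
  all (fun a => all (fun b => all (fun c => all (P a b c) bits) bits) bits) bits.

Lemma all4P (P : bitrel) : reflect (forall a b c d, P a b c d) (all4 P).
Proof.
have bitsP x : x \in bits by case: x.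
apply: (iffP idP) => [+ a b c d | P_all].
  by move/allP/(_ a (bitsP a))/allP/(_ b (bitsP b))/allP/(_ c (bitsP c))/allP/(_ d (bitsP d)).
by apply/allP => a _; apply/allP => b _; apply/allP => c _; apply/allP => d _.
Qed.

Lemma const_of_bits R rb b : encodes R rb -> rb b b b b -> R [ffun => b].
Proof. by move=> Rrb; rewrite ffun_const_tup Rrb. Qed.

Definition pres1_bits (h : bool -> bool) (rb sb : bitrel) : bool :=
  all4 (fun a b c d => rb a b c d ==> sb (h a) (h b) (h c) (h d)).

Definition pres2_bits (t : bool -> bool -> bool) (rb sb : bitrel) : bool :=
  all4 (fun u1 u2 u3 u4 => all4 (fun v1 v2 v3 v4 =>
    rb u1 u2 u3 u4 ==> rb v1 v2 v3 v4 ==> sb (t u1 v1) (t u2 v2) (t u3 v3) (t u4 v4))).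

Definition table (p q r s : bool) : bool -> bool -> bool :=
  fun x y => if x then (if y then s else r) else (if y then q else p).

Definition separating_binary_check (rb sb : bitrel) : bool :=
  [|| pres1_bits id rb sb, pres1_bits negb rb sb
    | all4 (fun p q r s => (q == r) || ~~ pres2_bits (table p q r s) rb sb)].

Section BitEncoding.

Variables (R S : pred T4) (rb sb : bitrel).
Hypotheses (Rrb : encodes R rb) (Ssb : encodes S sb).

Lemma preserves_of_pres1_bits (h : bool -> bool) :
  pres1_bits h rb sb -> preserves (fun x : {ffun 'I_1 -> bool} => h (x ord0)) R S.
Proof.
move=> /all4P h_ok a Ra.
have -> : [ffun c => h ([ffun k => a k c] ord0)] = [ffun c => h (a ord0 c)].
  by apply/ffunP => c; rewrite !ffunE.
move: (Ra ord0); rewrite (tup_eta (a ord0)) tup_map Rrb Ssb.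
exact/implyP/h_ok.
Qed.

Lemma pres2_bits_of_pres2 (t : bool -> bool -> bool) : pres2 R S t -> pres2_bits t rb sb.
Proof.
move=> Pt; apply/all4P => u1 u2 u3 u4; apply/all4P => v1 v2 v3 v4.
by rewrite -!Rrb -Ssb -tup_map2; apply/implyP => Ru; apply/implyP; exact: Pt.
Qed.

Lemma preserves_unary_of_separating_pres2 :
  separating_binary_check rb sb -> forall t, t true false != t false true -> pres2 R S t ->
  preserves id_fun R S \/ preserves neg_fun R S.
Proof.
case/or3P=> [/preserves_of_pres1_bits ? | /preserves_of_pres1_bits ? | /all4P no_sep] t sep Pt;
  [by left | by right |].
pose t' := table (t false false) (t false true) (t true false) (t true true).
have Pt' : pres2 R S t'.
  move=> u v Ru Rv; congr (S _): (Pt u v Ru Rv); apply/ffunP => c; rewrite !ffunE /t'.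
  by case: (u c); case: (v c).
case/orP: (no_sep (t false false) (t false true) (t true false) (t true true)) => [/eqP e|/negP []].
  by rewrite e eqxx in sep.
exact: pres2_bits_of_pres2.
Qed.

End BitEncoding.

Lemma Rel_const i b : 1 <= i <= 5 -> Rel i [ffun => b].
Proof.
case: i => [|[|[|[|[|[|i]]]]]] // _; apply: const_of_bits (encodes_rel_of _) _;
  by case: b; vm_compute.
Qed.

Lemma Rel_separating_binary i j t : 1 <= i <= 5 -> 1 <= j <= 5 ->
  t true false != t false true -> pres2 (Rel i) (prime_rel (Rel j)) t ->
  preserves id_fun (Rel i) (prime_rel (Rel j)) \/ preserves neg_fun (Rel i) (prime_rel (Rel j)).
Proof.
case: i => [|[|[|[|[|[|i]]]]]] //; case: j => [|[|[|[|[|[|j]]]]]] // _ _;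
  apply: (preserves_unary_of_separating_pres2 (encodes_rel_of _)
           (encodes_prime_rel (encodes_rel_of _)));
  by vm_compute.
Qed.

Theorem mainTheorem5 (i j : nat) :
  1 <= i <= 5 -> 1 <= j <= 5 ->
  ~ inPol (Rel i) (prime_rel (Rel j)) id_fun ->
  ~ inPol (Rel i) (prime_rel (Rel j)) neg_fun ->
  forall (n : nat) (f : boolfun n),
    inPol (Rel i) (prime_rel (Rel j)) f <-> is_constant f.
Proof.
move=> Hi Hj not_id not_neg n f; split; last first.
  by case=> b fb; apply: preserves_const fb _; rewrite /prime_rel Rel_const.
move=> Pf; have [// | [x [y fxy]]] := constant_or_separated f.
have [s g_sep] := separating_binary_minor fxy.
have Pg := preserves_pres2 (preserves_minor s (fun b => Rel_const b Hi) Pf).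
by case: (Rel_separating_binary Hi Hj g_sep Pg) => [/not_id | /not_neg].
Qed.
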